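(* Let $R$ be a topological ring and $M$ a locally compact left topological $R$-module which is of Lie type. Then $M$ has the no small submodules property.
   Context: All topological groups are Hausdorff; rings are unital. $R_R$ denotes $R$ as a right topological module over itself; its Pontryagin dual $\widehat{R_R}$ (continuous homomorphisms $R\to\mathbb{S}^1$, compact-open topology) is a left $R$-module via $(r\chi)(x)=\chi(xr)$. Two topological $R$-modules $M,M'$ are locally isomorphic if there are open neighbourhoods $U\subset M$, $V\subset M'$ of $0$ and a homeomorphism $f:U\to V$ such that $f(x+y)=f(x)+f(y)$ whenever $x,y,x+y\in U$, $f(-x)=-f(x)$ whenever $x,-x\in U$, and $f(rx)=rf(x)$ whenever $x\in U$, $r\in R$, $rx\in U$. $M$ is of Lie type if it is locally isomorphic to $\widehat{R_R}^n$ for some $n\ge 0$. $M$ has the no small submodules property if some neighbourhood of $0$ contains no nonzero submodule. *)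

From HB Require Import structures.
From mathcomp Require Import all_boot all_order all_algebra.
From mathcomp Require Import all_classical reals topology.
From mathcomp Require Import Rstruct Rstruct_topology.
Set Implicit Arguments. Unset Strict Implicit. Unset Printing Implicit Defensive.
Import Order.TTheory GRing.Theory Num.Theory.
Local Open Scope classical_set_scope.
Local Open Scope ring_scope.

HB.structure Definition TopNmod_join := {M of Topological M & GRing.Nmodule M}.
HB.structure Definition TopZmod_join := {M of Topological M & GRing.Zmodule M}.

HB.mixin Record Top_isTopRing R & Topological R & GRing.PzRing R := {
  ring_add_continuous : continuous (fun x : R * R => x.1 + x.2) ;
  ring_opp_continuous : continuous (fun x : R => - x) ;
  mul_continuous : continuous (fun x : R * R => x.1 * x.2) }.

#[short(type="topRingType")]
HB.structure Definition TopRing :=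
  {R of Topological R & GRing.PzRing R & Top_isTopRing R}.

HB.mixin Record Top_isTopLmod (R : topRingType) M
    & Topological M & GRing.Lmodule R M := {
  mod_add_continuous : continuous (fun x : M * M => x.1 + x.2) ;
  mod_opp_continuous : continuous (fun x : M => - x) ;
  scale_continuous : continuous (fun x : R * M => x.1 *: x.2) }.

#[short(type="topLmodType")]
HB.structure Definition TopLmod (R : topRingType) :=
  {M of Topological M & GRing.Lmodule R M & Top_isTopLmod R M}.

(** The circle group S^1, realised as the unit circle in R^2 = C
    (with the usual product topology), with complex multiplication. *)
Definition C2 : Type := (Rdefinitions.R * Rdefinitions.R)%type.
Definition on_circle (z : C2) : Prop := z.1 ^+ 2 + z.2 ^+ 2 = 1.
Definition cmul (z w : C2) : C2 := (z.1 * w.1 - z.2 * w.2, z.1 * w.2 + z.2 * w.1).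
Definition cconj (z : C2) : C2 := (z.1, - z.2).
Definition cone : C2 := (1, 0).

Definition is_character (R : topRingType) (chi : R -> C2) : Prop :=
  [/\ continuous chi, (forall x, on_circle (chi x))
    & (forall x y, chi (x + y) = cmul (chi x) (chi y))].

Definition dualpow (R : topRingType) (n : nat) : topologicalType :=
  {ptws 'I_n -> {compact-open, R -> C2}}.

(** The underlying set of (widehat{R_R})^n (with subspace topology). *)
Definition dual_set (R : topRingType) (n : nat) : set (dualpow R n) :=
  [set X | forall i, is_character (X i : R -> C2)].

Definition dzero (R : topRingType) (n : nat) : dualpow R n := fun _ _ => cone.
Definition dadd (R : topRingType) (n : nat) (X Y : dualpow R n) : dualpow R n :=
  fun i x => cmul ((X i : R -> C2) x) ((Y i : R -> C2) x).
Definition dopp (R : topRingType) (n : nat) (X : dualpow R n) : dualpow R n :=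
  fun i x => cconj ((X i : R -> C2) x).
Definition dscale (R : topRingType) (n : nat) (r : R) (X : dualpow R n) : dualpow R n :=
  fun i x => (X i : R -> C2) (x * r).

Definition locally_iso_dualpow (R : topRingType) (M : topLmodType R) (n : nat) : Prop :=
  exists (U : set M) (V : set (dualpow R n)) (f : M -> dualpow R n)
         (g : dualpow R n -> M),
  [/\
      (open U /\ U 0),
      ((exists W : set (dualpow R n), open W /\ V = W `&` @dual_set R n) /\ V (@dzero R n)),
      [/\ (forall x, U x -> V (f x)), (forall y, V y -> U (g y)),
          (forall x, U x -> g (f x) = x), (forall y, V y -> f (g y) = y)
        & ({within U, continuous f} /\ {within V, continuous g})],
      ((forall x y, U x -> U y -> U (x + y) -> f (x + y) = dadd (f x) (f y)) /\
       (forall x, U x -> U (- x) -> f (- x) = dopp (f x)))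
    &
      (forall (r : R) x, U x -> U (r *: x) -> f (r *: x) = dscale r (f x))].

Definition lie_type (R : topRingType) (M : topLmodType R) : Prop :=
  exists n : nat, locally_iso_dualpow M n.

Definition is_submodule (R : topRingType) (M : topLmodType R) (S : set M) : Prop :=
  [/\ S 0, (forall x y, S x -> S y -> S (x + y))
    & (forall (r : R) x, S x -> S (r *: x))].

Definition no_small_submodules (R : topRingType) (M : topLmodType R) : Prop :=
  exists N : set M, nbhs (0 : M) N /\
    forall S : set M, is_submodule S -> S `<=` N -> S = [set 0].

From HB Require Import structures.
From mathcomp Require Import all_boot all_order all_algebra.
From mathcomp Require Import all_classical reals topology.
From mathcomp Require Import normedtype Rstruct Rstruct_topology.
From mathcomp Require Import ring lra.
Set Implicit Arguments. Unset Strict Implicit. Unset Printing Implicit Defensive.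
Import Order.TTheory GRing.Theory Num.Theory.
Local Open Scope classical_set_scope.
Local Open Scope ring_scope.

(* A character of (R, +) all of whose values lie in the open right half of
   S^1 is trivial: on the circle, squaring at least doubles the defect
   1 - Re z of a point z with Re z >= 0, so if chi r had a positive defect,
   the defects of chi (r *+ 2 ^ k) would grow beyond 1, forcing a value
   with Re <= 0.  Now let f be a local isomorphism from M onto the dual
   module, and take the neighbourhood N of 0 on which every component of f
   takes a value with positive real part at 1.  A submodule S inside N
   contains r x for x in S, and (f (r x))_i 1 = (f x)_i r, so every
   component of f x is a character with values in the right half-plane,
   i.e. trivial; hence f x = 0 = f 0 and x = 0. *)

Lemma bounded_doubling_eq0 (K : archiRealFieldType) (d : K) :
  0 <= d -> (forall k, d *+ 2 ^ k <= 1) -> d = 0.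
Proof.
move=> d_ge0 d_bounded; apply/eqP; rewrite eq_le d_ge0 andbT leNgt.
apply/negP => d_gt0.
have [m lt_dV_m] : exists m : nat, d^-1 < m%:R.
  by exists (Num.Def.archi_bound d^-1); rewrite archi_boundP // invr_ge0.
have lt_m_2m : m%:R < (2 ^ m)%:R :> K by rewrite ltr_nat ltn_expl.
have := d_bounded m; rewrite -mulr_natr; apply/negP; rewrite -ltNge.
rewrite -[d^-1]mul1r ltr_pdivrMr // in lt_dV_m.
by rewrite mulrC (lt_trans lt_dV_m) // ltr_pM2r.
Qed.

Lemma circle_fst_le1 {z : C2} : on_circle z -> z.1 <= 1.
Proof. by case: z => a b; rewrite /on_circle /= => circ_ab; nra. Qed.

Lemma circle_fst_eq1 {z : C2} : on_circle z -> z.1 = 1 -> z = cone.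
Proof.
case: z => a b; rewrite /on_circle /cone /= => circ_ab a1; subst a.
have : b ^+ 2 = 0 by lra.
by move/eqP; rewrite sqrf_eq0 => /eqP ->.
Qed.

Lemma circle_cmul_idem {z : C2} : on_circle z -> cmul z z = z -> z = cone.
Proof.
case: z => a b; rewrite /on_circle /cmul /cone /= => circ_ab [re_idem im_idem].
have b0 : b = 0 by nra.
have a1 : a = 1 by subst b; nra.
by rewrite a1 b0.
Qed.

Lemma circle_defect_sqr {z : C2} : on_circle z -> 0 <= z.1 ->
  (1 - z.1) *+ 2 <= 1 - (cmul z z).1.
Proof. by case: z => a b; rewrite /on_circle /cmul /= => circ_ab a_ge0; nra. Qed.

Section Characters.
Variables (R : topRingType) (chi : R -> C2).
Hypothesis chi_char : is_character chi.

Lemma character0 : chi 0 = cone.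
Proof.
case: chi_char => _ circ add.
by apply: circle_cmul_idem => //; rewrite -add addr0.
Qed.

Lemma character_defect_muln2 (r : R) (k : nat) :
  (forall s, 0 <= (chi s).1) ->
  (1 - (chi r).1) *+ 2 ^ k <= 1 - (chi (r *+ 2 ^ k)).1.
Proof.
case: chi_char => _ circ add re_ge0; elim: k => [|k IHk]; first by rewrite expn0.
rewrite expnS mul2n -addnn !mulrnDr add.
apply: le_trans (circle_defect_sqr (circ (r *+ 2 ^ k)) (re_ge0 _)).
by rewrite mulr2n lerD.
Qed.

Lemma character_right_half_plane (r : R) :
  (forall s, 0 < (chi s).1) -> chi r = cone.
Proof.
case: chi_char => _ circ _ re_gt0.
apply: circle_fst_eq1 => //; apply/eqP; rewrite eq_sym -subr_eq0; apply/eqP.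
apply: bounded_doubling_eq0 => [|k].
  by rewrite subr_ge0; exact: circle_fst_le1 (circ r).
apply: le_trans (character_defect_muln2 r k (fun s => ltW (re_gt0 s))) _.
by have := re_gt0 (r *+ 2 ^ k); lra.
Qed.

End Characters.

Lemma open_fst_gt0 : open [set z : C2 | 0 < z.1].
Proof.
have fst_cont : continuous (@fst Rdefinitions.R Rdefinitions.R).
  by move=> z; exact: cvg_fst.
exact: (proj1 (continuousP _) fst_cont) _ (@open_gt _ 0).
Qed.

Definition dual_fst_gt0_at1 (R : topRingType) (n : nat) : set (dualpow R n) :=
  [set X | forall i, 0 < ((X i : R -> C2) 1).1].

Lemma nbhs_dzero_fst_gt0_at1 (R : topRingType) (n : nat) :
  nbhs (@dzero R n) (@dual_fst_gt0_at1 R n).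
Proof.
apply: (@filter_forall _ 'I_n (fun i (X : dualpow R n) => 0 < ((X i : R -> C2) 1).1)
  (nbhs (@dzero R n)) _) => i.
pose Q := [set h : {compact-open, R -> C2} | h @` [set 1] `<=` [set z | 0 < z.1]].
have nbhs_Q : nbhs (@dzero R n i) Q.
  apply: open_nbhs_nbhs; split.
    exact: compact_open_open (@compact_set1 _ _) open_fst_gt0.
  by move=> _ [x -> <-]; rewrite /dzero /cone /=; lra.
have nbhs_projQ : nbhs (@dzero R n) (proj i @^-1` Q) := proj_continuous nbhs_Q.
by apply: filterS nbhs_projQ => X Q_X; apply: Q_X; exists 1.
Qed.

Section LocallyIsoDualpow.
Variables (R : topRingType) (M : topLmodType R) (n : nat).
Variables (U : set M) (f : M -> dualpow R n) (g : dualpow R n -> M).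
Hypotheses (U_open : open U) (U0 : U 0).
Hypotheses (f_dual : forall x, U x -> @dual_set R n (f x)).
Hypothesis fK : forall x, U x -> g (f x) = x.
Hypothesis f_cont : {within U, continuous f}.
Hypothesis fZ : forall (r : R) x, U x -> U (r *: x) -> f (r *: x) = dscale r (f x).

Lemma locally_iso_f0 : f 0 = @dzero R n.
Proof.
have f0_char i : is_character (f 0 i : R -> C2) := f_dual U0 i.
have := @fZ 0 0 U0; rewrite scale0r => /(_ U0) ->.
apply/funext => i; apply/funext => x.
by rewrite /dscale mulr0 (character0 (f0_char i)).
Qed.

Lemma nbhs0_locally_iso_preimage :
  nbhs (0 : M) (U `&` f @^-1` @dual_fst_gt0_at1 R n).
Proof.
apply: filterI; first exact: open_nbhs_nbhs.
have f_cont0 : {for 0, continuous f}.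
  by move: f_cont; rewrite continuous_open_subspace // => /(_ 0 (mem_set U0)).
by apply: f_cont0; rewrite locally_iso_f0; exact: nbhs_dzero_fst_gt0_at1.
Qed.

Lemma locally_iso_no_small_submodules : no_small_submodules M.
Proof.
exists (U `&` f @^-1` @dual_fst_gt0_at1 R n).
split=> [|S [S0 _ SZ] S_small]; first exact: nbhs0_locally_iso_preimage.
apply/seteqP; split => [x Sx|_ ->] //=.
have Ux : U x := (S_small x Sx).1.
have fx0 : f x = @dzero R n.
  apply/funext => i; apply/funext => r.
  apply: character_right_half_plane; first exact: f_dual Ux i.
  move=> s; have [Usx fsx_gt0] := S_small _ (SZ s x Sx).
  by have := fsx_gt0 i; rewrite fZ // /dscale mul1r.
by rewrite -(fK Ux) fx0 -locally_iso_f0 fK.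
Qed.

End LocallyIsoDualpow.

Lemma locally_iso_dualpow_no_small_submodules (R : topRingType)
    (M : topLmodType R) (n : nat) :
  locally_iso_dualpow M n -> no_small_submodules M.
Proof.
move=> [U [V [f [g [[U_open U0] [[W [_ V_def]] _] [fUV _ fK _ [f_cont _]] _ fZ]]]]].
have f_dual x : U x -> @dual_set R n (f x) by rewrite V_def in fUV => /fUV [].
exact: locally_iso_no_small_submodules U_open U0 f_dual fK f_cont fZ.
Qed.

Theorem mainTheorem18 (R : topRingType) (M : topLmodType R) :
  hausdorff_space R -> hausdorff_space M ->
  locally_compact [set: M] -> lie_type M -> no_small_submodules M.
Proof. by move=> _ _ _ [n]; exact: locally_iso_dualpow_no_small_submodules. Qed.
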